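(* For any integers $r,t\ge 3$, $dim_s(K_r\times K_t)=\max\{r(t-1),\ t(r-1)\}$.
   Context: $K_n$ is the complete graph on $n$ vertices. The direct product $G\times H$ has vertex set $V(G)\times V(H)$, with $(a,b)$ adjacent to $(c,d)$ iff $ac\in E(G)$ and $bd\in E(H)$. For a connected graph $G$, $I_G[u,v]$ is the set of vertices lying on some shortest $u$–$v$ path; a vertex $w$ strongly resolves $u,v$ if $v\in I_G[u,w]$ or $u\in I_G[v,w]$; a strong resolving set is a set $S\subseteq V(G)$ such that every pair of vertices is strongly resolved by some vertex of $S$; $dim_s(G)$ is the minimum cardinality of a strong resolving set. *)

From mathcomp Require Import all_boot.
Set Implicit Arguments. Unset Strict Implicit. Unset Printing Implicit Defensive.

Fixpoint ball (T : finType) (e : rel T) (k : nat) (u : T) : {set T} :=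
  match k with
  | 0 => [set u]
  | k'.+1 => ball e k' u :|: [set y | [exists x in ball e k' u, e x y]]
  end.

(* Graph distance: least k with v in ball e k u, searched in 0..#|T|-1
   (correct for connected graphs, which is the standing assumption). *)
Definition gdist (T : finType) (e : rel T) (u v : T) : nat :=
  find (fun k => v \in ball e k u) (iota 0 #|T|).

Definition connected_graph (T : finType) (e : rel T) : Prop :=
  forall u v : T, exists k, v \in ball e k u.

Definition interval (T : finType) (e : rel T) (u v : T) : {set T} :=
  [set w | gdist e u w + gdist e w v == gdist e u v].

Definition strongly_resolves (T : finType) (e : rel T) (w u v : T) : bool :=
  (v \in interval e u w) || (u \in interval e v w).

Definition strong_resolving_set (T : finType) (e : rel T) (S : {set T}) : bool :=
  [forall u, forall v, (u != v) ==> [exists w in S, strongly_resolves e w u v]].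

(* dim_s(G): minimum cardinality of a strong resolving set (V(G) is one). *)
Definition sdim (T : finType) (e : rel T) : nat :=
  \big[minn/#|T|]_(S : {set T} | strong_resolving_set e S) #|S|.

Definition K_adj (n : nat) : rel 'I_n := fun i j => i != j.

Definition direct_prod (A B : finType) (eA : rel A) (eB : rel B) : rel (A * B) :=
  fun x y => eA x.1 y.1 && eB x.2 y.2.

From mathcomp Require Import all_boot zify.
Set Implicit Arguments. Unset Strict Implicit. Unset Printing Implicit Defensive.

(* In K_r x K_t (r, t >= 3) two distinct vertices are adjacent iff they differ
   in both coordinates, and otherwise at distance 2, the diameter.  A strong
   resolving set must contain one vertex of every pair of mutually maximally
   distant vertices, so the vertices outside it share no coordinate: there are
   at most min(r, t) of them.  Conversely, the complement of the diagonal
   {(i, i)} is strongly resolving: two distinct diagonal vertices u, v are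
   adjacent, and (u.1, k) with k avoiding u.2 and v.2 sees v on a shortest
   path to u. *)

Lemma bigminn_le_cond (I : eqType) (P : pred I) (F : I -> nat) x0 j (s : seq I) :
  P j -> j \in s -> \big[minn/x0]_(i <- s | P i) F i <= F j.
Proof.
move=> Pj; elim: s => [//|a s IH]; rewrite inE big_cons => /orP[/eqP <-|js].
  by rewrite Pj geq_minl.
case: (P a); last exact: IH.
exact: leq_trans (geq_minr _ _) (IH js).
Qed.

Lemma exists_neq2 n (a b : 'I_n) : 2 < n -> exists c : 'I_n, (c != a) && (c != b).
Proof.
move=> n_gt2; apply/existsP; apply: contraLR n_gt2 => /existsPn avoid.
have : #|'I_n| <= #|[set a; b]|.
  apply/subset_leq_card/subsetP => c _.
  by move: (avoid c); rewrite negb_and !negbK !inE orbC.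
by rewrite card_ord cards2 -leqNgt => /leq_trans; apply; case: (a != b).
Qed.

Lemma maxn_mul_subn1 r t : maxn (r * (t - 1)) (t * (r - 1)) = r * t - minn r t.
Proof. by rewrite !mulnBr !muln1 (mulnC t r); move: (r * t) => n; lia. Qed.

Section StrongMetricDimension.

Variables (T : finType) (e : rel T).

Lemma gdist_eq0 u v : (gdist e u v == 0) = (v == u).
Proof.
have T_gt0 : 0 < #|T| by apply/card_gt0P; exists u.
by rewrite /gdist -(prednK T_gt0) /= inE; case: (v == u).
Qed.

Lemma gdistxx u : gdist e u u = 0.
Proof. by apply/eqP; rewrite gdist_eq0. Qed.

Lemma strongly_resolves_l u v : strongly_resolves e u u v.
Proof. by rewrite /strongly_resolves !inE gdistxx addn0 eqxx orbT. Qed.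

Lemma strongly_resolves_r u v : strongly_resolves e v u v.
Proof. by rewrite /strongly_resolves !inE gdistxx addn0 eqxx. Qed.

Lemma strongly_resolves_diametral (D : nat) u v w :
  (forall x y, gdist e x y <= D) -> gdist e u v = D -> gdist e v u = D ->
  strongly_resolves e w u v -> w = u \/ w = v.
Proof.
move=> diam duv dvu; rewrite /strongly_resolves !inE duv dvu.
case/orP => /eqP d_eq; [right | left]; apply/eqP; rewrite -gdist_eq0 -leqn0.
- by have := diam u w; rewrite -d_eq -{2}[D]addn0 leq_add2l.
- by have := diam v w; rewrite -d_eq -{2}[D]addn0 leq_add2l.
Qed.

Lemma strong_resolving_set_outside (S : {set T}) :
  (forall u v, u \notin S -> v \notin S -> u != v ->
     exists2 w, w \in S & strongly_resolves e w u v) ->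
  strong_resolving_set e S.
Proof.
move=> resS; apply/forallP => u; apply/forallP => v; apply/implyP => uv.
case: (boolP (u \in S)) => uS; first by apply/existsP; exists u; rewrite uS strongly_resolves_l.
case: (boolP (v \in S)) => vS; first by apply/existsP; exists v; rewrite vS strongly_resolves_r.
by have [w wS res_w] := resS u v uS vS uv; apply/existsP; exists w; rewrite wS.
Qed.

Lemma gdist_diam2 u v : 2 < #|T| -> v \in ball e 2 u ->
  gdist e u v = if v == u then 0 else if e u v then 1 else 2.
Proof.
move=> T_gt2; have link : [exists x in [set u], e x v] = e u v.
  by apply/existsP/idP => [[x /andP[/set1P -> //]] | euv]; exists u; rewrite set11.
rewrite /gdist -(subnK T_gt2) addn3 /= !inE link.
by case: (v == u); case: (e u v) => //= ->.
Qed.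

Lemma sdim_le (S : {set T}) : strong_resolving_set e S -> sdim e <= #|S|.
Proof. by move=> srsS; apply: bigminn_le_cond; rewrite ?mem_index_enum. Qed.

Lemma sdim_ge n :
  n <= #|T| -> (forall S : {set T}, strong_resolving_set e S -> n <= #|S|) ->
  n <= sdim e.
Proof.
move=> nT srs_ge; apply: (big_ind (fun m => n <= m)) => // m1 m2.
by rewrite leq_min => -> ->.
Qed.

End StrongMetricDimension.

Section KxK.

Variables r t : nat.
Local Notation V := ('I_r * 'I_t)%type.
Local Notation G := (direct_prod (@K_adj r) (@K_adj t)).

Definition KxK_diag : {set V} := [set x | val x.1 == val x.2].

Lemma minn_le_card_diag : minn r t <= #|KxK_diag|.
Proof.
pose f (k : 'I_(minn r t)) : V := (widen_ord (geq_minl r t) k, widen_ord (geq_minr r t) k).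
have f_inj : injective f by move=> k l /(congr1 (fun x => val x.1)) /= kl; exact: val_inj.
rewrite -[minn r t]card_ord -(card_imset _ f_inj); apply/subset_leq_card/subsetP.
by move=> _ /imsetP[k _ ->]; rewrite inE.
Qed.

Lemma card_setC_diag : #|~: KxK_diag| <= r * t - minn r t.
Proof.
have := cardsC KxK_diag; have := minn_le_card_diag.
by rewrite card_prod !card_ord; lia.
Qed.

Hypotheses (r_gt2 : 2 < r) (t_gt2 : 2 < t).

Lemma KxK_ball2 (u v : V) : v \in ball G 2 u.
Proof.
have [a /andP[au av]] := exists_neq2 u.1 v.1 r_gt2.
have [b /andP[bu bv]] := exists_neq2 u.2 v.2 t_gt2.
rewrite /= !inE; apply/orP; right; apply/existsP; exists (a, b).
rewrite !inE /direct_prod /K_adj /= av bv !andbT; apply/orP; right.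
by apply/existsP; exists u; rewrite !inE eqxx /= eq_sym au eq_sym bu.
Qed.

Lemma gdist_KxK (u v : V) :
  gdist G u v = if v == u then 0 else if (u.1 != v.1) && (u.2 != v.2) then 1 else 2.
Proof.
apply: gdist_diam2 (KxK_ball2 u v).
by rewrite card_prod !card_ord; nia.
Qed.

Lemma gdist_KxK_le2 (u v : V) : gdist G u v <= 2.
Proof. by rewrite gdist_KxK; case: ifP => //; case: ifP. Qed.

Lemma gdist_KxK_line (u v : V) :
  u != v -> (u.1 == v.1) || (u.2 == v.2) -> gdist G u v = 2.
Proof.
by rewrite gdist_KxK eq_sym => /negbTE -> /orP[] /eqP ->; rewrite eqxx ?andbF.
Qed.

Lemma card_setC_strong_resolving (S : {set V}) :
  strong_resolving_set G S -> #|~: S| <= minn r t.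
Proof.
move=> /forallP srsS.
have off_line : {in ~: S &, forall u v, (u.1 == v.1) || (u.2 == v.2) -> u = v}.
  move=> u v; rewrite !inE => uS vS line; apply/eqP/negPn/negP => uv.
  have /existsP[w /andP[wS res_w]] := implyP (forallP (srsS u) v) uv.
  have vu : v != u by rewrite eq_sym.
  have line' : (v.1 == u.1) || (v.2 == u.2) by rewrite eq_sym [v.2 == _]eq_sym.
  have [wu|wv] := strongly_resolves_diametral gdist_KxK_le2
    (gdist_KxK_line uv line) (gdist_KxK_line vu line') res_w.
  - by rewrite -wu wS in uS.
  - by rewrite -wv wS in vS.
have inj1 : {in ~: S &, injective (fun x : V => x.1)}.
  by move=> u v uS vS /= eq1; apply: off_line; rewrite ?eq1 ?eqxx.
have inj2 : {in ~: S &, injective (fun x : V => x.2)}.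
  by move=> u v uS vS /= eq2; apply: off_line; rewrite ?eq2 ?eqxx ?orbT.
rewrite leq_min -{1}(card_in_imset inj1) -(card_in_imset inj2).
by rewrite (leq_trans (max_card _)) ?card_ord // (leq_trans (max_card _)) ?card_ord.
Qed.

Lemma card_strong_resolving_ge (S : {set V}) :
  strong_resolving_set G S -> r * t - minn r t <= #|S|.
Proof.
move/card_setC_strong_resolving; have := cardsC S.
by rewrite card_prod !card_ord; lia.
Qed.

Lemma strong_resolving_setC_diag : strong_resolving_set G (~: KxK_diag).
Proof.
apply: strong_resolving_set_outside => [[a b] [c d]].
rewrite !inE !negbK /= => /eqP dab /eqP dcd uv.
have eq_ac : (a == c) = (b == d) by rewrite -!(inj_eq (@ord_inj _)) dab dcd.
have [ac bd] : a != c /\ b != d.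
  by move: uv; rewrite xpair_eqE eq_ac andbb.
have [k /andP[kb kd]] := exists_neq2 b d t_gt2.
exists (a, k); first by rewrite !inE /= dab (inj_eq (@ord_inj _)) eq_sym.
rewrite /strongly_resolves inE !gdist_KxK !xpair_eqE /= [c == a]eq_sym [d == k]eq_sym.
by rewrite (negbTE ac) (negbTE kb) bd kd eqxx.
Qed.

End KxK.

Theorem proposition34 (r t : nat) :
  3 <= r -> 3 <= t ->
  sdim (direct_prod (@K_adj r) (@K_adj t)) = maxn (r * (t - 1)) (t * (r - 1)).
Proof.
move=> r_gt2 t_gt2; rewrite maxn_mul_subn1; apply/eqP; rewrite eqn_leq.
apply/andP; split.
- exact: leq_trans (sdim_le (strong_resolving_setC_diag r_gt2 t_gt2)) (card_setC_diag r t).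
- apply: sdim_ge; first by rewrite card_prod !card_ord leq_subr.
  exact: card_strong_resolving_ge.
Qed.
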